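(* Let $C$ be a cycle of length at least 4 in a 3-connected graph $F$, and let $K$ be (the vertex set of) a connected component of the reduced conflict graph $\mathrm{Con}^-(C)$. Then every vertex of $C$ belongs to $\mathrm{att}(K)=\bigcup_{X\in K}\mathrm{att}(X)$.
   Context: Let $F$ be a graph and $C$ a cycle of $F$. A $C$-bridge is either a chord of $C$ (an edge not in $C$ with both endpoints on $C$) or a connected component of $F-V(C)$ together with all edges joining it to $C$ and their endpoints on $C$. The attachments $\mathrm{att}(X)$ of a $C$-bridge $X$ are the vertices of $C$ incident to edges of $X$. Two pairs $\{x,y\}$, $\{u,v\}$ of four distinct vertices of $C$ alternate if each of the two arcs of $C$ with endpoints $x,y$ contains exactly one of $u,v$; two vertex sets $X,U\subseteq V(C)$ alternate if some pair from $X$ alternates with some pair from $U$. Two $C$-bridges have a four-vertex conflict if their attachment sets alternate. The reduced conflict graph $\mathrm{Con}^-(C)$ has the $C$-bridges as vertices, two adjacent iff they have a four-vertex conflict. *)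

(* Finite simple graphs as symmetric irreflexive relations. *)
From mathcomp Require Import all_boot.
Set Implicit Arguments. Unset Strict Implicit. Unset Printing Implicit Defensive.

Section Bridges.
Variables (T : finType) (e : rel T).

Definition del_rel (S : {set T}) : rel T :=
  [rel x y | [&& e x y, x \notin S & y \notin S]].

Definition k_connected (k : nat) : Prop :=
  k < #|T| /\
  forall S : {set T}, #|S| < k ->
    forall x y, x \notin S -> y \notin S -> connect (del_rel S) x y.

Variable c : seq T. (* the cycle C, listed in cyclic order *)

Definition cycle_edge (x y : T) : bool :=
  (next c x == y) || (next c y == x).

Definition is_chord (B : {set T}) : bool :=
  [exists x, exists y, [&& B == [set x; y], x \in c, y \in c, x != y,
                           e x y & ~~ cycle_edge x y]].

Definition off_rel : rel T := [rel x y | [&& e x y, x \notin c & y \notin c]].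

Definition is_comp (B : {set T}) : bool :=
  [exists u, (u \notin c) && (B == [set w | connect off_rel u w])].

(* A C-bridge is represented by its vertex set: {x,y} for a chord xy
   (a subset of V(C)), or the vertex set of the component of F - V(C)
   (disjoint from V(C), nonempty). *)
Definition is_bridge (B : {set T}) : bool := is_chord B || is_comp B.

Definition att (B : {set T}) : {set T} :=
  if B \subset [set x in c] then B
  else [set v in c | [exists u in B, e u v]].

Definition alternate (x y u v : T) : bool :=
  [&& uniq [:: x; y; u; v], all (mem c) [:: x; y; u; v],
      (u \in arc c x y) (+) (v \in arc c x y) &
      (u \in arc c y x) (+) (v \in arc c y x)].

Definition sets_alternate (X U : {set T}) : bool :=
  [exists x in X, exists y in X, exists u in U, exists v in U,
     alternate x y u v].

Definition conflict : rel {set T} := fun B1 B2 =>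
  [&& is_bridge B1, is_bridge B2, B1 != B2 & sets_alternate (att B1) (att B2)].

Definition is_conflict_component (K : {set {set T}}) : Prop :=
  exists B0, is_bridge B0 /\ K = [set B | connect conflict B0 B].

End Bridges.

From mathcomp Require Import all_boot zify.
Set Implicit Arguments. Unset Strict Implicit. Unset Printing Implicit Defensive.

(* Suppose v on C is not an attachment of K.  Number the vertices of C by their
   clockwise distance from v, so that v has position 0; alternation of two
   pairs of vertices of C becomes alternation of their positions on the line.
   Let b and a be the attachments of K with least and greatest position.
   (1) No bridge X has an attachment s outside the interval [b, a] and an
       attachment t strictly inside it: X is not in K (s is no attachment of
       K), so no bridge of K has attachments strictly on both sides of {s, t};
       propagating along conflicts, all attachments of K lie on one side of
       {s, t}, whereas b and a lie on opposite sides.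
   (2) Some vertex w of C lies strictly between b and a: otherwise a and b are
       the only attachments of K, impossible for a chord (ab is an edge of C)
       and for a component (3-connectivity gives it 3 attachments).
   (3) By (1), the vertices of C outside [b, a] together with the components
       attached there form a set closed under edges avoiding {a, b}; it
       contains v but not w, so {a, b} separates F, a contradiction. *)

Section CyclicDistance.
Variable n : nat.

Definition cdist (i j : nat) : nat := (j + n - i) %% n.

Definition btw (a b z : nat) : bool := (a < z < b) || (b < z < a).

Definition sep (a b x y : nat) : bool := btw a b x (+) btw a b y.

Lemma cdistE i j : i < n -> j < n -> cdist i j = if i <= j then j - i else j + n - i.
Proof.
move=> lt_i lt_j; rewrite /cdist; case: leqP => [le_ij|lt_ji].
- by rewrite -addnBAC // modnDr modn_small //; lia.
- by rewrite modn_small //; lia.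
Qed.

Lemma cdist_lt_n i j : i < n -> j < n -> cdist i j < n.
Proof. by move=> lt_i lt_j; rewrite cdistE //; case: ifP; lia. Qed.

Lemma cdist_shift o i j : o < n -> i < n -> j < n ->
  cdist (cdist o i) (cdist o j) = cdist i j.
Proof. by move=> lt_o lt_i lt_j; rewrite !cdistE ?cdist_lt_n //; repeat case: ifP; lia. Qed.

Lemma cdist_inj o i j : o < n -> i < n -> j < n -> cdist o i = cdist o j -> i = j.
Proof. by move=> lt_o lt_i lt_j; rewrite !cdistE //; repeat case: ifP; lia. Qed.

Lemma succ_modn x y : y < n -> x <= y <= x.+1 -> y != x -> x.+1 %% n = y.
Proof. by move=> lt_y le_xy ne_yx; rewrite modn_small; lia. Qed.

Lemma modn_succ x : x < n -> x.+1 %% n = if x.+1 == n then 0 else x.+1.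
Proof. by move=> lt_x; case: eqP => [->|ne]; rewrite ?modnn // modn_small //; lia. Qed.

Lemma cdist_succ o i : o < n -> i < n -> cdist o (i.+1 %% n) = (cdist o i).+1 %% n.
Proof.
move=> lt_o lt_i; rewrite modn_succ ?cdist_lt_n //.
by rewrite modn_succ // !cdistE //; repeat case: ifP; lia.
Qed.

Lemma cdist_lt_btw a b x : a < n -> b < n -> x < n -> uniq [:: a; b; x] ->
  (cdist a x < cdist a b) = ((a < b) == btw a b x).
Proof. by move=> lt_a lt_b lt_x; rewrite !cdistE //= !inE /btw; repeat case: ifP; lia. Qed.

Lemma straddle a b s t : (s < b) || (a < s) -> b < t < a ->
  [&& a != s, a != t, b != s, b != t & btw s t a != btw s t b].
Proof. by rewrite /btw; case/orP=> hs /andP [hb ha]; lia. Qed.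

Lemma squeeze x a b : b <= x -> x <= a -> a <= b.+1 -> (x == a) || (x == b).
Proof. lia. Qed.

Lemma not_inner a b y : ~~ (b < y < a) -> y != a -> y != b -> (y < b) || (a < y).
Proof. lia. Qed.

Lemma outside_succ a b x y : 0 < b -> a < n -> x < n -> y < n -> y != a -> y != b ->
  (y == x.+1 %% n) || (x == y.+1 %% n) -> (x < b) || (a < x) -> (y < b) || (a < y).
Proof. by move=> b_pos lt_a lt_x lt_y ya yb; rewrite !modn_succ //; repeat case: ifP; lia. Qed.

End CyclicDistance.

Lemma sep_sym a b x y : uniq [:: a; b; x; y] -> sep a b x y = sep x y a b.
Proof. by rewrite /= !inE /sep /btw; lia. Qed.

Lemma sep_closed_arc a b x y u w : uniq [:: x; y; u; w] ->
  [|| btw a b x, x == a | x == b] -> [|| btw a b y, y == a | y == b] ->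
  ~~ btw a b u -> ~~ btw a b w -> ~~ sep x y u w.
Proof.
rewrite /sep /btw /= !inE !negb_or; case/and4P=> /and3P[xy xu xw] /andP[yu yw] uw _.
by case/or3P=> hx; case/or3P=> hy hu hw; lia.
Qed.

Section SeqPositions.
Variables (T : eqType) (s : seq T).
Hypothesis s_uniq : uniq s.
Local Notation n := (size s).

Lemma index_rot k z : k < n -> z \in s -> index z (rot k s) = cdist n k (index z s).
Proof.
move=> lt_k zs; rewrite /cdist.
have lt_z : index z s < n by rewrite index_mem.
have [z_take|z_drop] := boolP (z \in take k s).
- have lt_zk : index z s < k by rewrite -in_take.
  have z_ndrop : z \notin drop k s.
    move: s_uniq; rewrite -{1}(cat_take_drop k s) cat_uniq => /and3P [_ /hasPn take_drop _].
    exact: contraTN (take_drop z) z_take.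
  rewrite /rot index_cat (negbTE z_ndrop) size_drop.
  have -> : index z (take k s) = index z s by rewrite -{2}(cat_take_drop k s) index_cat z_take.
  rewrite modn_small; lia.
- have z_drop' : z \in drop k s.
    by move: zs; rewrite -{1}(cat_take_drop k s) mem_cat (negbTE z_drop).
  have idx : index z s = k + index z (drop k s).
    by rewrite -{1}(cat_take_drop k s) index_cat (negbTE z_drop) size_take lt_k.
  rewrite /rot index_cat z_drop' -addnBAC ?idx ?leq_addr // modnDr modn_small; lia.
Qed.

Lemma arc_index x y u : x \in s -> y \in s -> u \in s ->
  (u \in arc s x y) = (cdist n (index x s) (index u s) < cdist n (index x s) (index y s)).
Proof.
move=> xs ys us; have lt_x : index x s < n by rewrite index_mem.
by rewrite /arc in_take ?mem_rot // !index_rot.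
Qed.

Lemma index_next z : z \in s -> index (next s z) s = (index z s).+1 %% n.
Proof.
move=> zs; rewrite next_nth zs.
case: s s_uniq zs => [//|y s'] uniq_ys zs.
have lt_z : index z (y :: s') < (size s').+1 by rewrite index_mem.
case: (ltnP (index z (y :: s')) (size s')) => [lt_zs|ge_zs].
- rewrite -[nth y s' _]/(nth y (y :: s') (index z (y :: s')).+1) index_uniq //.
  by rewrite modn_small.
- have -> : index z (y :: s') = size s' by lia.
  by rewrite nth_default //= eqxx modnn.
Qed.

Variable o : nat.
Hypothesis lt_o : o < n.

Definition pos (z : T) : nat := cdist n o (index z s).

Lemma pos_lt z : z \in s -> pos z < n.
Proof. by move=> zs; rewrite cdist_lt_n ?index_mem. Qed.

Lemma pos_eq x y : x \in s -> y \in s -> (pos x == pos y) = (x == y).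
Proof.
move=> xs ys; apply/eqP/eqP => [|-> //].
by move/cdist_inj; rewrite !index_mem => /(_ lt_o xs ys); apply: index_inj.
Qed.

Lemma pos_next z : z \in s -> pos (next s z) = (pos z).+1 %% n.
Proof. by move=> zs; rewrite /pos index_next // cdist_succ ?index_mem. Qed.

Lemma uniq_pos l : all (mem s) l -> uniq (map pos l) = uniq l.
Proof.
move=> /allP l_s; apply: map_inj_in_uniq => x y xl yl /eqP.
by rewrite pos_eq; [move/eqP | exact: l_s | exact: l_s].
Qed.

Lemma arc_pos x y u : x \in s -> y \in s -> u \in s -> uniq [:: x; y; u] ->
  (u \in arc s x y) = ((pos x < pos y) == btw (pos x) (pos y) (pos u)).
Proof.
move=> xs ys us xyu; have lt_i z : z \in s -> index z s < n by rewrite index_mem.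
rewrite arc_index // -(cdist_shift lt_o (lt_i x xs) (lt_i u us)).
rewrite -(cdist_shift lt_o (lt_i x xs) (lt_i y ys)) -/(pos x) -/(pos y) -/(pos u).
rewrite cdist_lt_btw ?pos_lt //.
by move: xyu; rewrite /= !inE !pos_eq.
Qed.

End SeqPositions.

Lemma btwC a b z : btw a b z = btw b a z.
Proof. by rewrite /btw orbC. Qed.

Lemma xor_eqb (p a b : bool) : (p == a) (+) (p == b) = a (+) b.
Proof. by case: p; case: a; case: b. Qed.

Lemma alternate_sep (T : finType) (s : seq T) (o : nat) x y u w :
  uniq s -> o < size s -> all (mem s) [:: x; y; u; w] -> uniq [:: x; y; u; w] ->
  alternate s x y u w = sep (pos s o x) (pos s o y) (pos s o u) (pos s o w).
Proof.
move=> s_uniq lt_o in_s U; move: (in_s) => /and4P [xs ys us /andP [ws _]].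
move: (U); rewrite /= !inE !negb_or => /and4P [/and3P [xy xu xw] /andP [yu yw] uw _].
have yx : y != x by rewrite eq_sym.
rewrite /alternate U in_s !(arc_pos s_uniq lt_o) //= ?inE ?negb_or ?xy ?xu ?xw ?yu ?yw ?yx //.
by rewrite /sep !(btwC (pos s o y)) !xor_eqb andbb.
Qed.

Lemma connect_invariant (T : finType) (r : rel T) (x0 : T) (Q : T -> Prop) :
  Q x0 -> (forall y z, connect r x0 y -> Q y -> r y z -> Q z) ->
  forall y, connect r x0 y -> Q y.
Proof.
move=> Q0 Qstep y /connectP [p r_p ->] {y}.
elim/last_ind: p r_p => [//|p z IHp].
rewrite rcons_path last_rcons => /andP [r_p r_z].
by apply: Qstep (IHp r_p) r_z; apply/connectP; exists p.
Qed.

Section Bridges.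
Variables (T : finType) (e : rel T) (c : seq T).

Lemma att_sub X z : z \in att e c X -> z \in c.
Proof.
rewrite /att; case: ifP => [/subsetP X_c /X_c|]; first by rewrite inE.
by rewrite inE => _ /andP [].
Qed.

Lemma att_chord B : is_chord e c B -> att e c B = B.
Proof.
case/existsP => x /existsP [y /and5P [/eqP -> xc yc _ _]].
rewrite /att ifT //; apply/subsetP => z.
by rewrite !inE => /orP [] /eqP ->.
Qed.

Lemma comp_off B z : is_comp e c B -> z \in B -> z \notin c.
Proof.
case/existsP => u /andP [uc /eqP ->]; rewrite inE.
apply: (connect_invariant (Q := fun w => w \notin c)) => // y w _ _.
by case/and3P.
Qed.

Lemma att_comp B : is_comp e c B -> att e c B = [set w in c | [exists u in B, e u w]].
Proof.
move=> B_comp; rewrite /att ifF //; apply/negbTE/subsetPn.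
case/existsP: (B_comp) => u /andP [uc /eqP B_def].
by exists u; rewrite ?inE ?uc // B_def inE connect0.
Qed.

Lemma comp_closed B x y : is_comp e c B -> x \in B -> e x y -> y \notin c -> y \in B.
Proof.
move=> B_comp xB xy yc; have xc := comp_off B_comp xB.
case/existsP: B_comp xB => u /andP [_ /eqP ->]; rewrite !inE => ux.
by apply: connect_trans ux (connect1 _); rewrite /off_rel /= xy xc.
Qed.

Lemma comp_of y : y \notin c ->
  is_comp e c [set z | connect (off_rel e c) y z] /\ y \in [set z | connect (off_rel e c) y z].
Proof.
by move=> yc; rewrite inE connect0; split => //; apply/existsP; exists y; rewrite yc eqxx.
Qed.

End Bridges.

Section ThreeConnected.
Variables (T : finType) (e : rel T) (c : seq T).
Hypothesis F3 : k_connected e 3.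

Lemma closed_part_full (S : {set T}) (Z : pred T) : #|S| < 3 ->
  (forall x y, Z x -> e x y -> y \notin S -> Z y) ->
  forall x y, Z x -> x \notin S -> y \notin S -> Z y.
Proof.
move=> S_small Z_closed x y Zx xS yS.
move: ((proj2 F3) S S_small x y xS yS).
apply: (connect_invariant (Q := Z)) => // u w _ Zu /and3P [uw _ wS].
exact: Z_closed uw wS.
Qed.

Hypotheses (c_uniq : uniq c) (c_len : 3 <= size c).

Lemma comp_att_card B : is_comp e c B -> 3 <= #|att e c B|.
Proof.
move=> B_comp; rewrite leqNgt; apply/negP => att_small.
have /subsetPn [w] : ~~ ([set x in c] \subset att e c B).
  apply: contraTN att_small => /subset_leq_card.
  by rewrite cardsE (card_uniqP c_uniq) -leqNgt => /(leq_trans c_len).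
rewrite inE => wc w_att.
case/existsP: (B_comp) => u /andP [uc /eqP B_def].
have uB : u \in B by rewrite B_def inE connect0.
have u_att : u \notin att e c B by apply: contraNN uc; apply: att_sub.
suff /(comp_off B_comp) : w \in B by rewrite wc.
apply: (closed_part_full (Z := fun z => z \in B) att_small _ uB u_att w_att).
move=> x y xB xy y_att.
have [yc|yc] := boolP (y \in c); last exact: comp_closed xB xy yc.
move/negP: y_att; case; rewrite att_comp // inE yc /=.
by apply/existsP; exists x; rewrite xB.
Qed.

End ThreeConnected.

Section ConflictComponent.
Variables (T : finType) (e : rel T) (c : seq T).
Hypothesis c_uniq : uniq c.
Variables (K : {set {set T}}) (B0 : {set T}).
Hypotheses (B0_bridge : is_bridge e c B0)
  (K_def : K = [set B | connect (conflict e c) B0 B]).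

Definition attK : {set T} := \bigcup_(X in K) att e c X.

Lemma B0_in_K : B0 \in K.
Proof. by rewrite K_def inE connect0. Qed.

Lemma K_closed X Y : X \in K -> conflict e c X Y -> Y \in K.
Proof. by rewrite K_def !inE => B0X XY; apply: connect_trans B0X (connect1 XY). Qed.

Lemma K_bridge X : X \in K -> is_bridge e c X.
Proof.
rewrite K_def inE.
by apply: (connect_invariant (Q := is_bridge e c)) => // Y Z _ _ /and3P [].
Qed.

Lemma mem_attK X z : X \in K -> z \in att e c X -> z \in attK.
Proof. by move=> XK zX; apply/bigcupP; exists X. Qed.

Lemma attK_sub z : z \in attK -> z \in c.
Proof. by case/bigcupP => X _ /att_sub. Qed.

Section OneSide.
Variable o : nat.
Hypothesis lt_o : o < size c.
Local Notation P := (pos c o).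
Variables (X : {set T}) (s t : T).
Hypotheses (X_bridge : is_bridge e c X) (X_notK : X \notin K).
Hypotheses (sX : s \in att e c X) (tX : t \in att e c X).
Local Notation inside z := (btw (P s) (P t) (P z)).

(* A bridge of K with an attachment strictly on one side of {s, t} has all
   its other attachments there too; otherwise it would conflict with X. *)
Lemma att_same_side Y y1 y2 : Y \in K -> y1 \in att e c Y -> y2 \in att e c Y ->
  y2 \notin [:: s; t] -> inside y1 -> inside y2.
Proof.
move=> YK y1Y y2Y y2_st in1; apply/negPn/negP => out2.
move/negP: X_notK; apply; apply: (K_closed YK).
rewrite /conflict (K_bridge YK) X_bridge /=; apply/andP; split.
  by apply: contraNneq X_notK => <-.
apply/existsP; exists y1; rewrite y1Y /=; apply/existsP; exists y2; rewrite y2Y /=.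
apply/existsP; exists s; rewrite sX /=; apply/existsP; exists t; rewrite tX /=.
have in_c : all (mem c) [:: y1; y2; s; t].
  by rewrite /= !(att_sub y1Y, att_sub y2Y, att_sub sX, att_sub tX).
have U : uniq [:: P y1; P y2; P s; P t].
  move: y2_st; rewrite !inE -!(pos_eq lt_o) ?(att_sub y2Y, att_sub sX, att_sub tX) //.
  by move: in1 out2; rewrite /= !inE /btw; lia.
have U' : uniq [:: y1; y2; s; t] by rewrite -(uniq_pos lt_o in_c).
rewrite (alternate_sep c_uniq lt_o in_c U') sep_sym //.
by rewrite /sep in1 (negbTE out2).
Qed.

Definition side (Y : {set T}) : bool := [exists y in att e c Y, inside y].

Lemma att_side Y y : Y \in K -> y \in att e c Y ->
  if side Y then [|| inside y, P y == P s | P y == P t] else ~~ inside y.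
Proof.
move=> YK yY; case: ifP => [/existsP [y1 /andP [y1Y in1]] | /negbT no_side].
- have [y_st|y_st] := boolP (y \in [:: s; t]).
    by move: y_st; rewrite !inE => /orP [] /eqP ->; rewrite eqxx ?orbT.
  by rewrite (att_same_side YK y1Y yY y_st in1).
- by apply: contra no_side => in_y; apply/existsP; exists y; rewrite yY.
Qed.

Lemma side_conflict Y Z : Y \in K -> conflict e c Y Z -> side Y = side Z.
Proof.
move=> YK YZ; have ZK := K_closed YK YZ.
case/and4P: YZ => _ _ _ /existsP [x /andP [xY /existsP [y /andP [yY
  /existsP [u /andP [uZ /existsP [w /andP [wZ alt]]]]]]]].
have /and4P [U in_c _ _] := alt.
rewrite (alternate_sep c_uniq lt_o in_c U) in alt.
have UP : uniq [:: P x; P y; P u; P w] by rewrite (uniq_pos lt_o in_c).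
have UP' : uniq [:: P u; P w; P x; P y].
  by rewrite -[[:: P u; _; _; _]]/([:: P u; P w] ++ [:: P x; P y]) uniq_catC.
have := att_side YK xY; have := att_side YK yY; have := att_side ZK uZ; have := att_side ZK wZ.
case: (side Y); case: (side Z) => // hw hu hy hx; exfalso; move: alt; apply/negP.
- exact: sep_closed_arc UP hx hy hu hw.
- by rewrite sep_sym //; exact: sep_closed_arc UP' hu hw hx hy.
Qed.

Lemma side_K Y : Y \in K -> side Y = side B0.
Proof.
rewrite {1}K_def inE; apply: (connect_invariant (Q := fun Y => side Y = side B0)) => //.
move=> Y1 Y2 B0Y1 <- Y12; have Y1K : Y1 \in K by rewrite K_def inE.
by rewrite (side_conflict Y1K Y12).
Qed.

Lemma one_side z1 z2 : z1 \in attK -> z2 \in attK ->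
  z1 \notin [:: s; t] -> z2 \notin [:: s; t] -> inside z1 = inside z2.
Proof.
suff side_z z : z \in attK -> z \notin [:: s; t] -> inside z = side B0.
  by move=> z1K z2K z1_st z2_st; rewrite !side_z.
case/bigcupP => Y YK zY; rewrite -(side_K YK).
have := att_side YK zY; case: (side Y) => [|/negbTE //].
rewrite !(pos_eq lt_o) ?(att_sub zY, att_sub sX, att_sub tX) // !inE negb_or.
by move=> in_z /andP [/negbTE zs /negbTE zt]; move: in_z; rewrite zs zt !orbF.
Qed.

End OneSide.

Hypotheses (e_sym : symmetric e) (e_irr : irreflexive e) (F3 : k_connected e 3).
Hypothesis c_len : 4 <= size c.

Section UncoveredVertex.
Variable v : T.
Hypotheses (vc : v \in c) (v_out : v \notin attK).

Let lt_v : index v c < size c. Proof. by rewrite index_mem. Qed.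
Local Notation P := (pos c (index v c)).

Lemma pos_v : P v = 0.
Proof. by rewrite /pos /cdist addKn modnn. Qed.

(* K has an attachment: chords have two, components three. *)
Lemma attK_nonempty : exists z, z \in attK.
Proof.
case/orP: B0_bridge => [chord|comp].
- case/existsP: (chord) => x /existsP [y /and5P [/eqP B0_def _ _ _ _]].
  by exists x; apply: (mem_attK B0_in_K); rewrite att_chord // B0_def !inE eqxx.
- have /card_gt0P [z zB0] : 0 < #|att e c B0|.
    exact: leq_trans (comp_att_card F3 c_uniq (ltnW c_len) comp).
  by exists z; apply: mem_attK B0_in_K zB0.
Qed.

Section Extremes.
Variables a b : T.
Hypotheses (aK : a \in attK) (bK : b \in attK).
Hypotheses (a_max : forall z, z \in attK -> P z <= P a)
  (b_min : forall z, z \in attK -> P b <= P z).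

Definition outside (z : T) : bool := (P z < P b) || (P a < P z).

Lemma no_straddle X s t : is_bridge e c X -> s \in att e c X -> t \in att e c X ->
  outside s -> ~~ (P b < P t < P a).
Proof.
move=> X_bridge sX tX s_out; apply/negP => t_in.
have [sc tc ac bc] := And4 (att_sub sX) (att_sub tX) (attK_sub aK) (attK_sub bK).
have s_notK : s \notin attK.
  by apply/negP => sK; move: s_out; rewrite /outside !ltnNge (b_min sK) (a_max sK).
have X_notK : X \notin K by apply: contra s_notK => XK; apply: mem_attK XK sX.
have /and5P [a_s a_t b_s b_t sides] := straddle s_out t_in.
have a_st : a \notin [:: s; t] by rewrite !inE -!(pos_eq lt_v) // negb_or a_s a_t.
have b_st : b \notin [:: s; t] by rewrite !inE -!(pos_eq lt_v) // negb_or b_s b_t.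
move/eqP: sides; apply.
exact: (one_side lt_v X_bridge X_notK sX tX aK bK a_st b_st).
Qed.

Lemma b_pos : 0 < P b.
Proof.
rewrite lt0n -pos_v (pos_eq lt_v (attK_sub bK) vc).
by apply: contraNneq v_out => <-.
Qed.

Lemma inner_vertex : exists2 w, w \in c & P b < P w < P a.
Proof.
have [ac bc] := (attK_sub aK, attK_sub bK).
case: (ltnP (P b).+1 (P a)) => [lt_ba | le_ab].
  exists (next c b); first by rewrite mem_next.
  by rewrite (pos_next c_uniq lt_v bc) modn_small ?leqnn // (ltn_trans lt_ba) ?pos_lt.
exfalso.
have ab_only z : z \in attK -> (z == a) || (z == b).
  move=> zK; have zc := attK_sub zK.
  by rewrite -!(pos_eq lt_v zc) // squeeze ?a_max ?b_min.
case/orP: B0_bridge => [chord|comp].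
- case/existsP: (chord) => x /existsP [y /and5P [/eqP B0_def xc yc xy /andP [_ not_edge]]].
  have xK : x \in attK by apply: (mem_attK B0_in_K); rewrite att_chord // B0_def !inE eqxx.
  have yK : y \in attK.
    by apply: (mem_attK B0_in_K); rewrite att_chord // B0_def !inE eqxx orbT.
  have next_b : a != b -> next c b = a.
    move=> ab; apply/eqP; rewrite -(pos_eq lt_v) ?mem_next // (pos_next c_uniq lt_v bc).
    by rewrite (succ_modn (pos_lt lt_v ac)) ?b_min ?le_ab // (pos_eq lt_v ac bc).
  move/negP: not_edge; apply; rewrite /cycle_edge.
  case/orP: (ab_only x xK) => /eqP Ex; case/orP: (ab_only y yK) => /eqP Ey;
    move: xy; rewrite Ex Ey ?eqxx // => ne.
  + by rewrite next_b // eqxx orbT.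
  + by rewrite next_b ?eqxx // eq_sym.
- have sub : att e c B0 \subset [set a; b].
    by apply/subsetP => z zB0; rewrite !inE; apply: ab_only (mem_attK B0_in_K zB0).
  have := leq_trans (comp_att_card F3 c_uniq (ltnW c_len) comp) (subset_leq_card sub).
  by rewrite cards2; case: (_ != _).
Qed.

Lemma outside_att X s y : is_bridge e c X -> s \in att e c X -> outside s ->
  y \in att e c X -> y \notin [set a; b] -> outside y.
Proof.
move=> X_bridge sX s_out yX; have yc := att_sub yX.
rewrite !inE negb_or -!(pos_eq lt_v yc) ?(attK_sub aK, attK_sub bK) // => /andP [ya yb].
exact: not_inner (no_straddle X_bridge sX yX s_out) ya yb.
Qed.

Lemma cycle_edge_outside x y : x \in c -> y \in c -> cycle_edge c x y -> outside x ->
  y \notin [set a; b] -> outside y.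
Proof.
move=> xc yc edge x_out; have [ac bc] := (attK_sub aK, attK_sub bK).
rewrite !inE negb_or -!(pos_eq lt_v yc) // => /andP [ya yb].
apply: outside_succ b_pos (pos_lt lt_v ac) (pos_lt lt_v xc) (pos_lt lt_v yc) ya yb _ x_out.
by case/orP: edge => /eqP <-; rewrite pos_next ?eqxx ?orbT.
Qed.

(* The side of {a, b} containing v: the vertices of C outside [b, a] and
   the components attached there. *)
Definition outer (x : T) : bool :=
  ((x \in c) && outside x) ||
  [exists B, [&& is_comp e c B, x \in B & [exists s in att e c B, outside s]]].

Lemma outer_closed x y : outer x -> e x y -> y \notin [set a; b] -> outer y.
Proof.
move=> x_outer xy y_ab; rewrite /outer.
have [yc|yc] := boolP (y \in c).
- apply/orP; left.
  case/orP: x_outer => [/andP [xc x_out] |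
    /existsP [B /and3P [B_comp xB /existsP [s /andP [sB s_out]]]]].
  + have [edge|not_edge] := boolP (cycle_edge c x y).
      exact: cycle_edge_outside edge x_out y_ab.
    have xy_ne : x != y by apply: contraTneq xy => ->; rewrite e_irr.
    have X_chord : is_chord e c [set x; y].
      apply/existsP; exists x; apply/existsP; exists y.
      by rewrite eqxx xc yc xy_ne xy not_edge.
    have X_bridge : is_bridge e c [set x; y] by rewrite /is_bridge X_chord.
    by apply: (outside_att X_bridge _ x_out _ y_ab); rewrite att_chord // !inE eqxx ?orbT.
  + have B_bridge : is_bridge e c B by rewrite /is_bridge B_comp orbT.
    apply: (outside_att B_bridge sB s_out _ y_ab).
    by rewrite att_comp // inE yc /=; apply/existsP; exists x; rewrite xB.
- case/orP: x_outer => [/andP [xc x_out] | /existsP [B /and3P [B_comp xB s_out]]].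
  + have [Y_comp yY] := comp_of e yc.
    apply/existsP; exists [set z | connect (off_rel e c) y z]; rewrite Y_comp yY /=.
    apply/existsP; exists x; rewrite x_out andbT att_comp // inE xc /=.
    by apply/existsP; exists y; rewrite yY e_sym.
  + by apply/existsP; exists B; rewrite B_comp s_out (comp_closed B_comp xB xy yc).
Qed.

(* {a, b} would separate v from the inner vertex w. *)
Lemma extremes_absurd : False.
Proof.
have [w wc w_in] := inner_vertex.
have [ac bc] := (attK_sub aK, attK_sub bK).
have ab_small : #|[set a; b]| < 3 by rewrite cards2; case: (_ != _).
have v_ab : v \notin [set a; b].
  by rewrite !inE; apply/norP; split; apply: contraNneq v_out => ->.
have w_ab : w \notin [set a; b].
  rewrite !inE -!(pos_eq lt_v wc) //; case/andP: w_in => lt_bw lt_wa.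
  by rewrite negb_or (ltn_eqF lt_wa) eq_sym (ltn_eqF lt_bw).
have v_outer : outer v by rewrite /outer vc /outside pos_v b_pos.
have := closed_part_full F3 ab_small outer_closed v_outer v_ab w_ab.
rewrite /outer wc /= => /orP [w_out | /existsP [B /and3P [B_comp wB _]]].
- move: w_out; case/andP: w_in => lt_bw lt_wa.
  by rewrite /outside ltnNge (ltnW lt_bw) ltnNge (ltnW lt_wa).
- by move: (comp_off B_comp wB); rewrite wc.
Qed.

End Extremes.

Lemma uncovered_absurd : False.
Proof.
have [z0 z0K] := attK_nonempty.
case: (arg_minnP P z0K) => b bK b_min.
case: (arg_maxnP P z0K) => a aK a_max.
exact: extremes_absurd aK bK a_max b_min.
Qed.

End UncoveredVertex.

Lemma attK_cover v : v \in c -> v \in attK.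
Proof. by move=> vc; apply/negPn/negP => v_out; apply: uncovered_absurd vc v_out. Qed.

End ConflictComponent.

Theorem mainTheorem8 (T : finType) (e : rel T)
  (e_sym : symmetric e) (e_irr : irreflexive e)
  (F3 : k_connected e 3)
  (c : seq T) (c_uniq : uniq c) (c_cyc : cycle e c) (c_len : 4 <= size c)
  (K : {set {set T}}) (HK : is_conflict_component e c K) :
  forall v, v \in c -> exists2 X, X \in K & v \in att e c X.
Proof.
move=> v vc; case: HK => B0 [B0_bridge K_def].
exact/bigcupP/(attK_cover c_uniq B0_bridge K_def e_sym e_irr F3 c_len vc).
Qed.
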